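(* Let $m\ge 1$ and $p\in S_m$. Then the following are equivalent: (i) for every $n\ge 2$, only finitely many $\omega\in\widetilde{S}_n$ avoid $p$; (ii) $p$ avoids the pattern $321$. Moreover, if $p$ contains $321$ then for every $n\ge2$ there are infinitely many $\omega\in\widetilde{S}_n$ avoiding $p$.
   Context: For $n\ge 2$, the affine symmetric group $\widetilde{S}_n$ is the set of bijections $\omega:\mathbb{Z}\to\mathbb{Z}$ such that $\omega(i+n)=\omega(i)+n$ for all $i\in\mathbb{Z}$ and $\sum_{i=1}^n\omega(i)=\binom{n+1}{2}$; write $\omega_i=\omega(i)$, and $[\omega_1,\dots,\omega_n]$ (the base window) determines $\omega$. For $p\in S_k$ (a permutation of $\{1,\dots,k\}$, written in one-line notation $p_1\cdots p_k$), $\omega$ contains $p$ if there exist integers $i_1<\cdots<i_k$ (arbitrary integers, not necessarily in $\{1,\dots,n\}$) such that $\omega_{i_1}\cdots\omega_{i_k}$ has the same relative order as $p_1\cdots p_k$ (i.e. $\omega_{i_a}<\omega_{i_b}$ iff $p_a<p_b$); otherwise $\omega$ avoids $p$. The same notion of containment/avoidance is used between ordinary permutations. *)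

From HB Require Import structures.
From mathcomp Require Import all_boot all_order all_algebra all_fingroup.
From Stdlib Require Import List.
Set Implicit Arguments. Unset Strict Implicit. Unset Printing Implicit Defensive.
Import Order.TTheory GRing.Theory Num.Theory.
Local Open Scope ring_scope.

Definition affine_perm (n : nat) (w : int -> int) : Prop :=
  bijective w /\
  (forall i : int, w (i + n%:Z) = w i + n%:Z) /\
  \sum_(1 <= i < n.+1) w i%:Z = ('C(n.+1, 2))%:Z.

Definition aff_contains (k : nat) (w : int -> int) (p : 'S_k) : Prop :=
  exists idx : 'I_k -> int,
    (forall a b : 'I_k, (a < b)%N -> idx a < idx b) /\
    (forall a b : 'I_k, w (idx a) < w (idx b) <-> (p a < p b)%N).

Definition aff_avoids (k : nat) (w : int -> int) (p : 'S_k) : Prop :=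
  ~ aff_contains w p.

Definition perm_contains (m k : nat) (p : 'S_m) (q : 'S_k) : Prop :=
  exists idx : 'I_k -> 'I_m,
    (forall a b : 'I_k, (a < b)%N -> (idx a < idx b)%N) /\
    (forall a b : 'I_k, (p (idx a) < p (idx b))%N <-> (q a < q b)%N).

Definition perm_avoids (m k : nat) (p : 'S_m) (q : 'S_k) : Prop :=
  ~ perm_contains p q.

Definition pat321 : 'S_3 := perm (@rev_ord_inj 3).

Definition finitely_many (P : (int -> int) -> Prop) : Prop :=
  exists l : list (int -> int),
    forall w, P w -> exists g, In g l /\ (forall x, w x = g x).

(* A permutation avoiding 321 is the union of two increasing subsequences: its
   left-to-right maxima and the remaining entries.  Let w be an affine
   permutation avoiding such a p.  The offsets w i - i sum to zero over a
   window, so if one of them is huge there are positions i0 < i0 + d, d < n,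
   with w i0 = w (i0 + d) + g and g huge.  By periodicity the progressions
   i0 + t n and i0 + d + s n are two interleaved rows of positions on which w
   increases, the values of the first row running about g / n columns ahead
   of the second; once g / n >= 2 ^ (m + 1), p embeds greedily into these
   rows (maxima on the first row, the rest on the second).  So the window of
   w is bounded and there are finitely many such w.  Conversely, moving the
   multiples of n down by (n - 1) k n and all other integers up by k n gives,
   for each k, an affine permutation that is the union of two increasing
   sequences, hence avoids 321 and every pattern containing it. *)

From HB Require Import structures.
From mathcomp Require Import all_boot all_order all_algebra all_fingroup zify.
From Stdlib Require Import Lia.
From Stdlib Require List.
Set Implicit Arguments. Unset Strict Implicit. Unset Printing Implicit Defensive.
Import Order.TTheory GRing.Theory Num.Theory.

(** * Embedding a 321-avoiding sequence into two interleaved rows *)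

Lemma ltnS_split a k : a < k.+1 -> a = k \/ a < k.
Proof. by rewrite ltnS leq_eqVlt => /predU1P. Qed.

Definition is_lrmax (v : nat -> nat) (a : nat) : bool :=
  all (fun b => v b < v a) (iota 0 a).

Definition inj_below (v : nat -> nat) (m : nat) : Prop :=
  forall a b, a < m -> b < m -> v a = v b -> a = b.

Definition no321_below (v : nat -> nat) (m : nat) : Prop :=
  forall a b c, a < b -> b < c -> c < m -> v b < v a -> v c < v b -> False.

Lemma lrmax_gt v a b : is_lrmax v a -> b < a -> v b < v a.
Proof. by move=> /allP max_a ba; apply: max_a; rewrite mem_iota. Qed.

Lemma not_lrmaxP v m b : inj_below v m -> b < m -> ~~ is_lrmax v b ->
  exists2 a, a < b & v b < v a.
Proof.
move=> v_inj bm; rewrite /is_lrmax -has_predC => /hasP[a]; rewrite mem_iota /= => ab.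
rewrite -leqNgt leq_eqVlt => /predU1P[vab|]; last by exists a.
by have := v_inj a b (ltn_trans ab bm) bm (esym vab) => eab; rewrite eab ltnn in ab.
Qed.

Lemma non_lrmax_lt v m b k : inj_below v m -> no321_below v m -> k < m -> b < k ->
  ~~ is_lrmax v b -> v b < v k.
Proof.
move=> v_inj v_no321 km bk b_nmax.
have bm := ltn_trans bk km.
have [a ab vba] := not_lrmaxP v_inj bm b_nmax.
case: (ltngtP (v b) (v k)) => // [vkb|vbk]; first by case: (v_no321 a b k).
by have := v_inj b k bm km vbk => ebk; rewrite ebk ltnn in bk.
Qed.

(* Two rows of positions X 0 < Y 0 < X 1 < Y 1 < ... on which w is increasing
   along each row, the values of row X running E columns ahead of row Y. *)
Record band (X Y : nat -> int) (w : int -> int) (E : nat) : Prop := Band {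
  ltXX : forall t t', t < t' -> (X t < X t')%R;
  ltYY : forall s s', s < s' -> (Y s < Y s')%R;
  ltXY : forall t s, t <= s -> (X t < Y s)%R;
  ltYX : forall t s, s < t -> (Y s < X t)%R;
  wltXX : forall t t', t < t' -> (w (X t) < w (X t'))%R;
  wltYY : forall s s', s < s' -> (w (Y s) < w (Y s'))%R;
  wltXY : forall t s, t + E <= s -> (w (X t) < w (Y s))%R;
  wltYX : forall t s, s < t + E -> (w (Y s) < w (X t))%R }.

Section BandEmbedding.

Variables (X Y : nat -> int) (w : int -> int) (E : nat).
Hypothesis XYband : band X Y w E.
Variables (v : nat -> nat) (m : nat).
Hypotheses (v_inj : inj_below v m) (v_no321 : no321_below v m).

Definition place (c : nat -> nat) (a : nat) : int :=
  if is_lrmax v a then X (c a) else Y (c a).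

(* The first k entries of v sit in the columns c a <= M, on row X for the
   left-to-right maxima and on row Y otherwise.  The slack B leaves room for
   what comes next: maxima are B columns apart, and a maximum above every
   placed non-maximum beats in value each Y in a column < M + B. *)
Definition embed_inv k (c : nat -> nat) M B : Prop := [/\
  forall a b, a < b -> b < k -> (place c a < place c b)%R,
  forall a b, a < k -> b < k -> v a < v b -> (w (place c a) < w (place c b))%R,
  forall a, a < k -> c a <= M,
  forall a b, a < k -> b < k -> is_lrmax v a -> is_lrmax v b -> v a < v b ->
    c a + B <= c b &
  forall a, a < k -> is_lrmax v a ->
    (forall b, b < k -> ~~ is_lrmax v b -> v b < v a) -> M + B <= c a + E].

Lemma place_update c k x a : a < k -> place [eta c with k |-> x] a = place c a.
Proof. by move=> ak; rewrite /place /= ltn_eqF. Qed.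

Lemma embed_step_lrmax k c M B : 0 < B -> B <= E -> is_lrmax v k ->
  embed_inv k c M (2 * B) -> embed_inv k.+1 [eta c with k |-> M + B] (M + B) B.
Proof.
move=> B_gt0 BE k_max [incr mono leM sep slack].
have updE a : a < k -> [eta c with k |-> M + B] a = c a by move=> ak; rewrite /= ltn_eqF.
have place_k : place [eta c with k |-> M + B] k = X (M + B) by rewrite /place k_max /= eqxx.
have below_k a : a < k ->
    (place c a < X (M + B))%R /\ (w (place c a) < w (X (M + B)))%R.
  move=> ak; have := leM a ak; rewrite /place; case: is_lrmax => leaM.
  - by split; [apply: (ltXX XYband) | apply: (wltXX XYband)]; lia.
  - by split; [apply: (ltYX XYband) | apply: (wltYX XYband)]; lia.
split.
- move=> a b ab /ltnS_split[eb|bk].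
    by subst b; rewrite place_k place_update //; case: (below_k a ab).
  by rewrite !place_update //; [apply: incr | apply: ltn_trans bk].
- move=> a b /ltnS_split[->|ak] /ltnS_split[->|bk] vab.
  + by rewrite ltnn in vab.
  + by have := lrmax_gt k_max bk; lia.
  + by rewrite place_k place_update //; case: (below_k a ak).
  + by rewrite !place_update //; apply: mono.
- move=> a /ltnS_split[->|ak]; first by rewrite /= eqxx.
  by rewrite updE //; have := leM a ak; lia.
- move=> a b /ltnS_split[->|ak] /ltnS_split[->|bk] a_max b_max vab.
  + by rewrite ltnn in vab.
  + by have := lrmax_gt k_max bk; lia.
  + by rewrite updE //= eqxx; have := leM a ak; lia.
  + by rewrite !updE //; have := sep a b ak bk a_max b_max vab; lia.
- move=> a /ltnS_split[->|ak] a_max above; first by rewrite /= eqxx; lia.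
  have := slack a ak a_max (fun b bk => above b (ltnW bk)).
  by rewrite updE //; lia.
Qed.

(* The leftmost column of row Y that lies right of every placed entry and
   exceeds in value every placed maximum below v k. *)
Definition nonmax_col k (c : nat -> nat) M : nat :=
  maxn M.+1 (\max_(a <- iota 0 k | is_lrmax v a && (v a < v k)) (c a + E)).

Lemma embed_step_nonmax k c M B : 0 < B -> k < m -> ~~ is_lrmax v k ->
  embed_inv k c M (2 * B) ->
  embed_inv k.+1 [eta c with k |-> nonmax_col k c M] (nonmax_col k c M) B.
Proof.
move=> B_gt0 km k_nmax [incr mono leM sep slack].
set s := nonmax_col k c M.
have updE a : a < k -> [eta c with k |-> s] a = c a by move=> ak; rewrite /= ltn_eqF.
have place_k : place [eta c with k |-> s] k = Y s by rewrite /place (negbTE k_nmax) /= eqxx.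
have s_gtM : M < s by apply: leq_maxl.
have s_lrmax a : a < k -> is_lrmax v a -> v a < v k -> c a + E <= s.
  move=> ak a_max vak; rewrite leq_max; apply/orP; right.
  by apply: leq_bigmax_seq; rewrite ?mem_iota ?a_max.
have nonmax_lt b : b < k -> ~~ is_lrmax v b -> v b < v k.
  exact: non_lrmax_lt v_inj v_no321 km.
have s_below a : a < k -> is_lrmax v a -> v k < v a -> s + B <= c a + E.
  move=> ak a_max vka.
  have slack_a := slack a ak a_max
    (fun b bk b_nmax => ltn_trans (nonmax_lt b bk b_nmax) vka).
  suff : s <= c a + E - B by lia.
  rewrite geq_max; apply/andP; split; first lia.
  apply/bigmax_leqP_seq => a'; rewrite mem_iota => /andP[_ a'k] /andP[a'_max va'k].
  by have := sep a' a a'k ak a'_max a_max (ltn_trans va'k vka); lia.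
have below_k a : a < k -> (place c a < Y s)%R.
  move=> ak; have := leM a ak; rewrite /place; case: is_lrmax => leaM.
  - by apply: (ltXY XYband); lia.
  - by apply: (ltYY XYband); lia.
split.
- move=> a b ab /ltnS_split[eb|bk].
    by subst b; rewrite place_k place_update // below_k.
  by rewrite !place_update //; [apply: incr | apply: ltn_trans bk].
- move=> a b /ltnS_split[->|ak] /ltnS_split[->|bk] vab.
  + by rewrite ltnn in vab.
  + have b_max : is_lrmax v b by apply/negPn/negP => /(nonmax_lt b bk); lia.
    rewrite place_k place_update // /place b_max.
    by apply: (wltYX XYband); have := s_below b bk b_max vab; lia.
  + rewrite place_k place_update // /place; case: ifP => a_max.
    * by apply: (wltXY XYband); apply: s_lrmax.
    * by apply: (wltYY XYband); have := leM a ak; lia.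
  + by rewrite !place_update //; apply: mono.
- move=> a /ltnS_split[->|ak]; first by rewrite /= eqxx.
  by rewrite updE //; have := leM a ak; lia.
- move=> a b /ltnS_split[->|ak] /ltnS_split[->|bk] a_max b_max vab.
  + by rewrite ltnn in vab.
  + by rewrite a_max in k_nmax.
  + by rewrite b_max in k_nmax.
  + by rewrite !updE //; have := sep a b ak bk a_max b_max vab; lia.
- move=> a /ltnS_split[->|ak] a_max above; first by rewrite a_max in k_nmax.
  by rewrite updE //; apply: s_below => //; apply: above.
Qed.

Lemma embed_inv_prefix : 2 ^ m.+1 <= E ->
  forall k, k <= m -> exists c M, embed_inv k c M (2 ^ (m.+1 - k)).
Proof.
move=> E_large; elim=> [|k IH] km; first by exists (fun=> 0), 0.
have [c [M inv_k]] := IH (ltnW km).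
have halve : 2 ^ (m.+1 - k) = 2 * 2 ^ (m.+1 - k.+1) by rewrite -expnS; congr (2 ^ _); lia.
have B_gt0 : 0 < 2 ^ (m.+1 - k.+1) by rewrite expn_gt0.
rewrite halve in inv_k.
case k_max: (is_lrmax v k).
- exists [eta c with k |-> M + 2 ^ (m.+1 - k.+1)], (M + 2 ^ (m.+1 - k.+1)).
  apply: embed_step_lrmax => //.
  by apply: leq_trans E_large; rewrite leq_exp2l //; lia.
- exists [eta c with k |-> nonmax_col k c M], (nonmax_col k c M).
  by apply: embed_step_nonmax => //; rewrite k_max.
Qed.

Lemma band_embedding : 2 ^ m.+1 <= E ->
  exists f : nat -> int, (forall a b, a < b -> b < m -> (f a < f b)%R) /\
    (forall a b, a < m -> b < m -> v a < v b -> (w (f a) < w (f b))%R).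
Proof.
move=> E_large; have [c [M [incr mono _ _ _]]] := embed_inv_prefix E_large (leqnn m).
by exists (place c).
Qed.

End BandEmbedding.

(** * Patterns of permutations *)

Definition perm_nat m (p : 'S_m) (a : nat) : nat :=
  if insub a is Some o then p o else 0.

Lemma perm_nat_ord m (p : 'S_m) a (am : a < m) : perm_nat p a = p (Ordinal am).
Proof. by rewrite /perm_nat insubT. Qed.

Lemma perm_natE m (p : 'S_m) (o : 'I_m) : perm_nat p o = p o.
Proof. by case: o => a am; rewrite perm_nat_ord. Qed.

Lemma perm_nat_inj m (p : 'S_m) : inj_below (perm_nat p) m.
Proof. by move=> a b am bm; rewrite !perm_nat_ord => /val_inj/perm_inj[]. Qed.

Lemma pat321E (o : 'I_3) : pat321 o = 2 - o :> nat.
Proof. by rewrite permE; case: o => [[|[|[|?]]] ?]. Qed.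

Lemma perm_nat_no321 m (p : 'S_m) : perm_avoids p pat321 -> no321_below (perm_nat p) m.
Proof.
move=> p_av a b c ab bc cm; have bm := ltn_trans bc cm; have am := ltn_trans ab bm.
rewrite !perm_nat_ord => vba vcb; apply: p_av.
pose idx (o : 'I_3) := nth (Ordinal cm) [:: Ordinal am; Ordinal bm] o.
have dec (i j : 'I_3) : i < j -> p (idx j) < p (idx i).
  by case: i j => [[|[|[|?]]] ?] [[|[|[|?]]] ?] //= _; apply: ltn_trans vcb vba.
exists idx; split.
- by case=> [[|[|[|?]]] ?] [[|[|[|?]]] ?] //= _; apply: ltn_trans bc.
- move=> i j; rewrite !pat321E; have := ltn_ord i; have := ltn_ord j.
  case: (ltngtP i j) => [ij|ji|/val_inj->]; [have := dec _ _ ij | have := dec _ _ ji |]; lia.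
Qed.

Lemma aff_contains_of_embedding m (p : 'S_m) (w : int -> int) (f : nat -> int) :
  (forall a b, a < b -> b < m -> (f a < f b)%R) ->
  (forall a b, a < m -> b < m -> perm_nat p a < perm_nat p b -> (w (f a) < w (f b))%R) ->
  aff_contains w p.
Proof.
move=> f_incr f_mono; exists (fun o => f o); split=> [a b ab | a b]; first exact: f_incr.
have mono (i j : 'I_m) : p i < p j -> (w (f i) < w (f j))%R.
  by rewrite -!perm_natE; apply: f_mono.
split=> [wab|/mono//].
case: (ltngtP (p a) (p b)) => [//|/mono wba|/val_inj/perm_inj eab].
- by have := lt_trans wab wba; rewrite ltxx.
- by rewrite eab ltxx in wab.
Qed.

Lemma aff_contains_trans k m (w : int -> int) (p : 'S_m) (q : 'S_k) :
  aff_contains w p -> perm_contains p q -> aff_contains w q.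
Proof.
move=> [idx [idx_incr idx_pat]] [jdx [jdx_incr jdx_pat]].
exists (idx \o jdx); split=> [a b ab | a b] /=; first by apply/idx_incr/jdx_incr.
by rewrite idx_pat jdx_pat.
Qed.

(** * Long descents of affine permutations *)

Local Open Scope ring_scope.

Definition shift_periodic (n : nat) (w : int -> int) : Prop :=
  forall x, w (x + n%:Z) = w x + n%:Z.

Lemma shift_periodicM n (w : int -> int) : shift_periodic n w ->
  forall (q : int) x, w (x + q * n%:Z) = w x + q * n%:Z.
Proof.
move=> w_per; elim/int_rec => [x|q IH x|q IH x]; first by rewrite mul0r !addr0.
- have -> : x + q.+1%:Z * n%:Z = x + q%:Z * n%:Z + n%:Z by lia.
  by rewrite w_per IH; lia.
- have shiftE : x + - q%:Z * n%:Z = x + - q.+1%:Z * n%:Z + n%:Z by lia.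
  move: (IH x); rewrite shiftE w_per => /(congr1 (fun z => z - n%:Z)).
  by rewrite addrK => ->; lia.
Qed.

Lemma band_of_descent n (w : int -> int) (i0 : int) (d g : nat) :
  shift_periodic n w -> injective w -> (0 < d < n)%N -> (0 < g)%N ->
  w i0 = w (i0 + d%:Z) + g%:Z ->
  band (fun t => i0 + (t * n)%:Z) (fun s => i0 + (d + s * n)%:Z) w (g %/ n).+1.
Proof.
move=> w_per w_inj /andP[d_gt0 dn] g_gt0 w_descent.
have w_perM := shift_periodicM w_per.
have wX t : w (i0 + (t * n)%:Z) = w (i0 + d%:Z) + (g + t * n)%:Z.
  by rewrite PoszM w_perM w_descent; lia.
have wY s : w (i0 + (d + s * n)%:Z) = w (i0 + d%:Z) + (s * n)%:Z.
  by rewrite PoszD addrA PoszM w_perM.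
have g_nmult : (g %% n != 0)%N.
  apply/eqP => g_mod; suff /w_inj : w i0 = w (i0 + (d + g %/ n * n)%:Z) by lia.
  by rewrite wY w_descent {1}(divn_eq g n) g_mod addn0.
have g_lt : (g < (g %/ n).+1 * n)%N by rewrite ltn_ceil //; lia.
have g_gt : (g %/ n * n < g)%N.
  by rewrite {2}(divn_eq g n) -[X in (X < _)%N]addn0 ltn_add2l lt0n.
split=> [t t'|s s'|t s|t s|t t'|s s'|t s|t s] ?; rewrite ?wX ?wY; nia.
Qed.

Lemma sum_window_id n : \sum_(1 <= i < n.+1) i%:Z = ('C(n.+1, 2))%:Z.
Proof.
elim: n => [|n IH]; first by rewrite big_geq.
by rewrite big_nat_recr //= IH [in RHS]binS bin1 PoszD.
Qed.

Lemma affine_offset_sum n w : affine_perm n w ->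
  \sum_(1 <= i < n.+1) (w i%:Z - i%:Z) = 0.
Proof. by case=> _ [_ w_sum]; rewrite sumrB w_sum sum_window_id subrr. Qed.

Lemma sum_eq0_nonpos (f : nat -> int) n : (0 < n)%N ->
  \sum_(1 <= i < n.+1) f i = 0 -> exists i, [/\ (0 < i)%N, (i <= n)%N & f i <= 0].
Proof.
move=> n_gt0 f_sum.
have [/hasP[i]|/hasPn f_pos] := boolP (has (fun i => f i <= 0) (iota 1 n)).
  by rewrite mem_iota => /andP[i_gt0 i_le] fi; exists i; split=> //; lia.
suff : \sum_(1 <= i < n.+1) (0 : int) < \sum_(1 <= i < n.+1) f i.
  by rewrite big1 // f_sum ltxx.
apply: ltr_sum_nat => // i /andP[i_gt0 i_le]; rewrite ltNge f_pos // mem_iota; lia.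
Qed.

Lemma descent_of_offset_gap n (w : int -> int) (K a b : nat) :
  shift_periodic n w -> (0 < a <= n)%N -> (0 < b <= n)%N ->
  (K + n)%:Z + (w b%:Z - b%:Z) < w a%:Z - a%:Z ->
  exists (i0 : int) (d g : nat), [/\ (0 < d < n)%N, (K < g)%N & w i0 = w (i0 + d%:Z) + g%:Z].
Proof.
move=> w_per a_win b_win gap; exists a%:Z.
case: (ltngtP a b) => [ab|ba|eab]; last by subst b; lia.
- exists (b - a)%N, `|w a%:Z - w b%:Z|%N.
  have -> : a%:Z + (b - a)%N%:Z = b%:Z by lia.
  split; lia.
- exists (b + n - a)%N, `|w a%:Z - w (b + n)%N%:Z|%N.
  have -> : a%:Z + (b + n - a)%N%:Z = (b + n)%N%:Z by lia.
  rewrite PoszD w_per; split; lia.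
Qed.

Lemma aff_contains_of_descent n m (w : int -> int) (p : 'S_m) (i0 : int) (d g : nat) :
  shift_periodic n w -> injective w -> perm_avoids p pat321 ->
  (0 < d < n)%N -> (2 ^ m.+1 * n < g)%N -> w i0 = w (i0 + d%:Z) + g%:Z ->
  aff_contains w p.
Proof.
move=> w_per w_inj p_av d_win g_large w_descent.
have XYband := band_of_descent w_per w_inj d_win (leq_ltn_trans (leq0n _) g_large) w_descent.
have E_large : (2 ^ m.+1 <= (g %/ n).+1)%N by apply: leqW; rewrite leq_divRL; lia.
have [f [f_incr f_mono]] :=
  band_embedding XYband (@perm_nat_inj m p) (perm_nat_no321 p_av) E_large.
exact: aff_contains_of_embedding f_incr f_mono.
Qed.

Lemma affine_avoider_offset_bound n m (w : int -> int) (p : 'S_m) :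
  (2 <= n)%N -> affine_perm n w -> perm_avoids p pat321 -> aff_avoids w p ->
  forall i : nat, (0 < i <= n)%N -> `|w i%:Z - i%:Z| <= (2 ^ m.+1 * n + n)%N%:Z.
Proof.
move=> n_ge2 w_aff p_av w_av i i_win.
have [w_bij [w_per _]] := w_aff.
have no_gap (a b : nat) : (0 < a <= n)%N -> (0 < b <= n)%N ->
    ~ ((2 ^ m.+1 * n + n)%N%:Z + (w b%:Z - b%:Z) < w a%:Z - a%:Z).
  move=> a_win b_win /(descent_of_offset_gap w_per a_win b_win).
  move=> [i0 [d [g [d_win g_large descent]]]]; apply: w_av.
  exact: aff_contains_of_descent w_per (bij_inj w_bij) p_av d_win g_large descent.
have n_gt0 : (0 < n)%N by lia.
have sum0 := affine_offset_sum w_aff.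
have [b [b_gt0 b_le b_nonpos]] := sum_eq0_nonpos n_gt0 sum0.
have sumN0 : \sum_(1 <= j < n.+1) - (w j%:Z - j%:Z) = 0 by rewrite sumrN sum0 oppr0.
have [a [a_gt0 a_le a_nonneg]] := sum_eq0_nonpos n_gt0 sumN0.
have := no_gap i b i_win; have := no_gap a i; lia.
Qed.

(** * Finiteness from a bounded window *)

Lemma In_map (T : eqType) (U : Type) (f : T -> U) (x : T) (s : seq T) :
  x \in s -> List.In (f x) (map f s).
Proof. by elim: s => //= y s IH; rewrite inE => /predU1P[->|/IH]; [left | right]. Qed.

Fixpoint lists_over (R : seq int) (k : nat) : seq (seq int) :=
  if k is k'.+1 then [seq x :: l | x <- R, l <- lists_over R k'] else [:: [::]].

Lemma lists_overP R l : all (mem R) l -> l \in lists_over R (size l).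
Proof. by elim: l => //= x l IH /andP[xR lR]; apply: allpairs_f => //; apply: IH. Qed.

Definition window_fun (n : nat) (l : seq int) (x : int) : int :=
  x + nth 0 l (absz ((x - 1) %% n%:Z)%Z).

Lemma finitely_many_bounded_window n K (P : (int -> int) -> Prop) : (0 < n)%N ->
  (forall w, P w -> shift_periodic n w /\
     forall i : nat, (0 < i <= n)%N -> `|w i%:Z - i%:Z| <= K%:Z) ->
  finitely_many P.
Proof.
move=> n_gt0 P_bounded.
pose offsets := [seq i%:Z - K%:Z | i <- iota 0 (K + K).+1].
exists (map (window_fun n) (lists_over offsets n)) => w /P_bounded[w_per w_bd].
pose l := [seq w i.+1%:Z - i.+1%:Z | i <- iota 0 n].
exists (window_fun n l); split.
  have l_size : size l = n by rewrite size_map size_iota.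
  apply: In_map; rewrite -[X in lists_over _ X]l_size; apply: lists_overP.
  apply/allP => y /mapP[i]; rewrite mem_iota => /andP[_ i_lt] ->.
  have bd : `|w i.+1%:Z - i.+1%:Z| <= K%:Z by apply: w_bd; lia.
  by apply/mapP; exists (absz (w i.+1%:Z - i.+1%:Z + K%:Z)); rewrite ?mem_iota; lia.
move=> x; rewrite /window_fun.
have /andP[r_ge0 r_lt] : 0 <= ((x - 1) %% n%:Z)%Z < n%:Z.
  by rewrite modz_ge0 ?ltz_pmod //; lia.
have xE := divz_eq (x - 1) n%:Z.
set r := absz ((x - 1) %% n%:Z)%Z.
have r_ltn : (r < n)%N by lia.
rewrite (nth_map 0%N) ?size_iota // nth_iota // add0n.
have -> : x = r.+1%:Z + ((x - 1) %/ n%:Z)%Z * n%:Z by lia.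
by rewrite shift_periodicM //; lia.
Qed.

(** * Infinitely many 321-avoiders *)

Definition multiple_of (n : nat) (x : int) : bool := ((x %% n%:Z)%Z == 0).

Definition split_shift (n k : nat) (x : int) : int :=
  if multiple_of n x then x - ((n - 1) * k * n)%N%:Z else x + (k * n)%N%:Z.

Lemma multiple_ofDM n x (c : int) : multiple_of n (x + c * n%:Z) = multiple_of n x.
Proof. by rewrite /multiple_of addrC modzMDl. Qed.

Lemma split_shift_periodic n k : shift_periodic n (split_shift n k).
Proof.
move=> x; have := multiple_ofDM n x 1; rewrite mul1r /split_shift => ->.
by case: multiple_of; lia.
Qed.

Lemma split_shift_bij n k : bijective (split_shift n k).
Proof.
exists (fun y => if multiple_of n y then y + ((n - 1) * k * n)%N%:Z else y - (k * n)%N%:Z).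
- move=> x; rewrite /split_shift; case x_mult: (multiple_of n x).
  + by rewrite PoszM -mulNr multiple_ofDM x_mult; lia.
  + by rewrite PoszM multiple_ofDM x_mult; lia.
- move=> y; case y_mult: (multiple_of n y); rewrite /split_shift.
  + by rewrite PoszM multiple_ofDM y_mult; lia.
  + by rewrite PoszM -mulNr multiple_ofDM y_mult; lia.
Qed.

Lemma multiple_of_window n (i : nat) : (0 < i <= n)%N -> multiple_of n i%:Z = (i == n).
Proof.
move=> /andP[i_gt0 i_le]; rewrite /multiple_of modz_nat eqz_nat.
case: ltngtP i_le => // [i_lt|->] _; last by rewrite modnn.
by rewrite modn_small //; lia.
Qed.

Lemma split_shift_sum n k : (2 <= n)%N ->
  \sum_(1 <= i < n.+1) split_shift n k i%:Z = ('C(n.+1, 2))%:Z.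
Proof.
move=> n_ge2; have n_gt0 : (0 < n)%N by lia.
rewrite -sum_window_id !big_nat_recr //=.
rewrite {2}/split_shift multiple_of_window ?eqxx; last by lia.
rewrite (eq_big_nat _ _ (F2 := fun i => i%:Z + (k * n)%N%:Z)); last first.
  by move=> i i_win; rewrite /split_shift multiple_of_window; [rewrite ifN //|]; lia.
by rewrite big_split /= sumr_const_nat; lia.
Qed.

Lemma split_shift_affine n k : (2 <= n)%N -> affine_perm n (split_shift n k).
Proof.
move=> n_ge2; split; first exact: split_shift_bij.
by split; [exact: split_shift_periodic | exact: split_shift_sum].
Qed.

Lemma split_shift_mono n k x y : multiple_of n x = multiple_of n y -> x < y ->
  split_shift n k x < split_shift n k y.
Proof. by rewrite /split_shift => ->; case: multiple_of; lia. Qed.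

(* Any three positions contain two of the same kind, on which the map increases. *)
Lemma split_shift_avoids321 n k : aff_avoids (split_shift n k) pat321.
Proof.
move=> [idx [idx_incr idx_pat]].
have idx_dec (i j : 'I_3) : (i < j)%N -> split_shift n k (idx j) < split_shift n k (idx i).
  by move=> ij; apply/idx_pat; rewrite !pat321E; have := ltn_ord j; lia.
have kinds_differ (i j : 'I_3) : (i < j)%N -> multiple_of n (idx i) != multiple_of n (idx j).
  move=> ij; apply/negP => /eqP/split_shift_mono/(_ (idx_incr i j ij)).
  by move/(_ k)/lt_trans/(_ (idx_dec i j ij)); rewrite ltxx.
have := kinds_differ (@Ordinal 3 0 isT) (@Ordinal 3 1 isT) isT.
have := kinds_differ (@Ordinal 3 1 isT) (@Ordinal 3 2 isT) isT.
have := kinds_differ (@Ordinal 3 0 isT) (@Ordinal 3 2 isT) isT.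
by do 3!case: multiple_of.
Qed.

Lemma split_shift1 n k : (2 <= n)%N -> split_shift n k 1 = 1 + (k * n)%N%:Z.
Proof. by move=> n_ge2; rewrite /split_shift multiple_of_window ?ifN //; lia. Qed.

Lemma list_bounded_at (l : list (int -> int)) (x : int) :
  exists N : nat, forall g, List.In g l -> g x < N%:Z.
Proof.
elim: l => [|g l [N N_bd]]; first by exists 0%N.
by exists (N + absz (g x)).+1 => h /= [<-|/N_bd]; lia.
Qed.

Lemma infinitely_many_avoiders n m (p : 'S_m) : (2 <= n)%N -> perm_contains p pat321 ->
  ~ finitely_many (fun w => affine_perm n w /\ aff_avoids w p).
Proof.
move=> n_ge2 p321 [l l_all]; have [N N_bd] := list_bounded_at l 1.
have avoid : aff_avoids (split_shift n N) p.
  by move=> /aff_contains_trans/(_ p321); apply: split_shift_avoids321.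
have [g [gl g_eq]] := l_all _ (conj (split_shift_affine N n_ge2) avoid).
by have := N_bd g gl; rewrite -g_eq split_shift1 //; nia.
Qed.

Theorem theorem1 (m : nat) (hm : (1 <= m)%N) (p : 'S_m) :
  ((forall n : nat, (2 <= n)%N ->
      finitely_many (fun w => affine_perm n w /\ aff_avoids w p))
   <-> perm_avoids p pat321)
  /\
  (perm_contains p pat321 ->
   forall n : nat, (2 <= n)%N ->
     ~ finitely_many (fun w => affine_perm n w /\ aff_avoids w p)).
Proof.
split; last by move=> p321 n n_ge2; apply: infinitely_many_avoiders.
split=> [finite p321 | p_av n n_ge2]; first exact: infinitely_many_avoiders (finite 2%N isT).
apply: (@finitely_many_bounded_window n (2 ^ m.+1 * n + n)%N); first by lia.
move=> w [w_aff w_av]; split; first by case: w_aff => _ [].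
exact: affine_avoider_offset_bound n_ge2 w_aff p_av w_av.
Qed.
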